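(* Let $K$ be a field with $\operatorname{char}(K)\neq2$ and let $M$ be a Leibniz $K$-algebra. Let $M\star M$ be the Leibniz $K$-algebra generated by symbols $m_1\otimes m_2$ and $m_1\circledast m_2$ ($m_1,m_2\in M$), both $K$-bilinear in their arguments, subject to the relations, for all $m_1,m_2,m_3,m_4\in M$: $m_1\otimes[m_2,m_3]=[m_1,m_2]\otimes m_3-[m_1,m_3]\otimes m_2$; $m_1\circledast[m_2,m_3]=[m_1,m_2]\circledast m_3-[m_1,m_3]\circledast m_2$; $[m_1,m_2]\otimes m_3=[m_1,m_3]\circledast m_2-m_1\otimes[m_3,m_2]$; $[m_1,m_2]\circledast m_3=[m_1,m_3]\otimes m_2-m_1\circledast[m_3,m_2]$; $m_1\otimes[m_2,m_3]=-m_1\otimes[m_3,m_2]$; $m_1\circledast[m_2,m_3]=-m_1\circledast[m_3,m_2]$; and, for every choice of symbols $\diamond,\diamond'\in\{\otimes,\circledast\}$, $[m_1,m_2]\otimes[m_3,m_4]=[m_1\diamond m_2,m_3\diamond' m_4]=[m_1,m_2]\circledast[m_3,m_4]$. Consider the crossed module of Leibniz $K$-algebras $(M\star M,M,(\cdot_1,\cdot_2),\partial)$ with, on generators, $m\cdot_1(m_1\otimes m_2)=[m,m_1]\otimes m_2-[m,m_2]\circledast m_1$, $m\cdot_1(m_1\circledast m_2)=[m,m_1]\circledast m_2-[m,m_2]\otimes m_1$, $(m_1\otimes m_2)\cdot_2m=[m_1,m]\otimes m_2+m_1\otimes[m_2,m]$, $(m_1\circledast m_2)\cdot_2m=[m_1,m]\circledast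 m_2+m_1\circledast[m_2,m]$, and $\partial(m_1\otimes m_2)=[m_1,m_2]=\partial(m_1\circledast m_2)$. Then the pair of $K$-bilinear maps $\{-,-\},\langle-,-\rangle\colon M\times M\to M\star M$, $\{m_1,m_2\}=m_1\otimes m_2$, $\langle m_1,m_2\rangle=m_1\circledast m_2$, is a braiding on this crossed module.
   Context: A Leibniz $K$-algebra: bilinear bracket with $[x,[y,z]]=[[x,y],z]-[[x,z],y]$. A crossed module of Leibniz algebras $(L,N,(\cdot_1,\cdot_2),\partial)$ consists of bilinear maps $\cdot_1\colon N\times L\to L$, $\cdot_2\colon L\times N\to L$ forming a Leibniz action and a Leibniz homomorphism $\partial\colon L\to N$ with $\partial(n\cdot_1l)=[n,\partial l]$, $\partial(l\cdot_2n)=[\partial l,n]$, $\partial(l)\cdot_1l'=[l,l']=l\cdot_2\partial(l')$. A braiding on it is a pair of bilinear maps $\{-,-\},\langle-,-\rangle\colon N\times N\to L$ with, for all $l,l'\in L$, $n,n',n''\in N$: $\partial\{n,n'\}=[n,n']=\partial\langle n,n'\rangle$; $\{\partial l,\partial l'\}=[l,l']=\langle\partial l,\partial l'\rangle$; $\{\partial l,n\}=l\cdot_2n=\langle\partial l,n\rangle$; $\{n,\partial l\}=n\cdot_1l=\langle n,\partial l\rangle$; $\{n,[n',n'']\}=\{[n,n'],n''\}-\{[n,n''],n'\}$; $\langle n,[n',n'']\rangle=\{[n,n'],n''\}-\langle[n,n''],n'\rangle$; $\{n,[n',n'']\}=\{[n,n'],n''\}-\langle[n,n''],n'\rangle$;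 $\langle n,[n',n'']\rangle=\langle[n,n'],n''\rangle-\langle[n,n''],n'\rangle$. (The structure $(M\star M,M,(\cdot_1,\cdot_2),\partial)$ above is the non-abelian tensor product of $M$ with itself for the bracket actions, and is known to be a crossed module of Leibniz algebras.) *)

From HB Require Import structures.
From mathcomp Require Import all_boot all_order all_algebra.
Set Implicit Arguments. Unset Strict Implicit. Unset Printing Implicit Defensive.
Import GRing.Theory.
Local Open Scope ring_scope.

Section Defs.
Variable K : fieldType.

Definition linmap (A B : lmodType K) (f : A -> B) : Prop :=
  forall (a : K) x y, f (a *: x + y) = a *: f x + f y.

Definition bilin (A B C : lmodType K) (f : A -> B -> C) : Prop :=
  (forall (a : K) x x' y, f (a *: x + x') y = a *: f x y + f x' y) /\
  (forall (a : K) x y y', f x (a *: y + y') = a *: f x y + f x y').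

Definition leibniz (V : lmodType K) (br : V -> V -> V) : Prop :=
  bilin br /\ forall x y z, br x (br y z) = br (br x y) z - br (br x z) y.

Definition leib_hom (A B : lmodType K) (brA : A -> A -> A) (brB : B -> B -> B)
  (h : A -> B) : Prop :=
  linmap h /\ forall x y, h (brA x y) = brB (h x) (h y).

(* Leibniz action of (N, brN) on (L, brL) via bilinear maps
   act1 : N x L -> L and act2 : L x N -> L (the six identities expressing that
   the semidirect product L >< N is a Leibniz algebra). *)
Definition leib_action (L N : lmodType K) (brL : L -> L -> L) (brN : N -> N -> N)
  (act1 : N -> L -> L) (act2 : L -> N -> L) : Prop :=
  bilin act1 /\ bilin act2 /\
  (forall l n n', act2 l (brN n n') = act2 (act2 l n) n' - act2 (act2 l n') n) /\
  (forall n l n', act1 n (act2 l n') = act2 (act1 n l) n' - act1 (brN n n') l) /\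
  (forall n n' l, act1 n (act1 n' l) = act1 (brN n n') l - act2 (act1 n l) n') /\
  (forall l l' n, brL l (act2 l' n) = act2 (brL l l') n - brL (act2 l n) l') /\
  (forall l n l', brL l (act1 n l') = brL (act2 l n) l' - act2 (brL l l') n) /\
  (forall n l l', act1 n (brL l l') = brL (act1 n l) l' - brL (act1 n l') l).

Definition crossed_module (L N : lmodType K) (brL : L -> L -> L) (brN : N -> N -> N)
  (act1 : N -> L -> L) (act2 : L -> N -> L) (del : L -> N) : Prop :=
  leibniz brL /\ leibniz brN /\ leib_action brL brN act1 act2 /\
  leib_hom brL brN del /\
  (forall n l, del (act1 n l) = brN n (del l)) /\
  (forall l n, del (act2 l n) = brN (del l) n) /\
  (forall l l', act1 (del l) l' = brL l l') /\
  (forall l l', act2 l (del l') = brL l l').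

Definition braiding (L N : lmodType K) (brL : L -> L -> L) (brN : N -> N -> N)
  (act1 : N -> L -> L) (act2 : L -> N -> L) (del : L -> N)
  (b1 b2 : N -> N -> L) : Prop :=
  bilin b1 /\ bilin b2 /\
  (forall n n', del (b1 n n') = brN n n' /\ del (b2 n n') = brN n n') /\
  (forall l l', b1 (del l) (del l') = brL l l' /\ b2 (del l) (del l') = brL l l') /\
  (forall l n, b1 (del l) n = act2 l n /\ b2 (del l) n = act2 l n) /\
  (forall n l, b1 n (del l) = act1 n l /\ b2 n (del l) = act1 n l) /\
  (forall n n' n'', b1 n (brN n' n'') = b1 (brN n n') n'' - b1 (brN n n'') n') /\
  (forall n n' n'', b2 n (brN n' n'') = b1 (brN n n') n'' - b2 (brN n n'') n') /\
  (forall n n' n'', b1 n (brN n' n'') = b1 (brN n n') n'' - b2 (brN n n'') n') /\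
  (forall n n' n'', b2 n (brN n' n'') = b2 (brN n n') n'' - b2 (brN n n'') n').

(* The defining relations of M * M (t = tensor symbol, c = circledast symbol). *)
Definition star_rels (M P : lmodType K) (brM : M -> M -> M) (brP : P -> P -> P)
  (t c : M -> M -> P) : Prop :=
  (forall m1 m2 m3, t m1 (brM m2 m3) = t (brM m1 m2) m3 - t (brM m1 m3) m2) /\
  (forall m1 m2 m3, c m1 (brM m2 m3) = c (brM m1 m2) m3 - c (brM m1 m3) m2) /\
  (forall m1 m2 m3, t (brM m1 m2) m3 = c (brM m1 m3) m2 - t m1 (brM m3 m2)) /\
  (forall m1 m2 m3, c (brM m1 m2) m3 = t (brM m1 m3) m2 - c m1 (brM m3 m2)) /\
  (forall m1 m2 m3, t m1 (brM m2 m3) = - t m1 (brM m3 m2)) /\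
  (forall m1 m2 m3, c m1 (brM m2 m3) = - c m1 (brM m3 m2)) /\
  (forall (b b' : bool) m1 m2 m3 m4,
     let d := if b then t else c in let d' := if b' then t else c in
     t (brM m1 m2) (brM m3 m4) = brP (d m1 m2) (d' m3 m4) /\
     brP (d m1 m2) (d' m3 m4) = c (brM m1 m2) (brM m3 m4)).

(* (P, brP, t, c) is the Leibniz algebra M * M presented by generators
   t m1 m2, c m1 m2 (bilinear) and the relations star_rels, i.e. it has the
   universal property of that presentation. *)
Definition is_star (M P : lmodType K) (brM : M -> M -> M) (brP : P -> P -> P)
  (t c : M -> M -> P) : Prop :=
  leibniz brP /\ bilin t /\ bilin c /\ star_rels brM brP t c /\
  forall (Q : lmodType K) (brQ : Q -> Q -> Q) (t' c' : M -> M -> Q),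
    leibniz brQ -> bilin t' -> bilin c' -> star_rels brM brQ t' c' ->
    exists h : P -> Q,
      [/\ leib_hom brP brQ h,
          (forall m1 m2, h (t m1 m2) = t' m1 m2),
          (forall m1 m2, h (c m1 m2) = c' m1 m2) &
          (forall h' : P -> Q, leib_hom brP brQ h' ->
             (forall m1 m2, h' (t m1 m2) = t' m1 m2) ->
             (forall m1 m2, h' (c m1 m2) = c' m1 m2) -> forall x, h' x = h x)].

End Defs.

From HB Require Import structures.
From mathcomp Require Import all_boot all_order all_algebra boolp.
Import GRing.Theory.
Local Open Scope ring_scope.
Set Implicit Arguments. Unset Strict Implicit. Unset Printing Implicit Defensive.

(* In M ⋆ M the symbols ⊗ and ⊛ agree as soon as one argument is a bracket, and
   [m1,m2] ⊗ m3 = [m1,m3] ⊗ m2 + m1 ⊗ [m2,m3]; both facts follow from the defining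
   relations alone.  The braiding axioms then reduce to n ·₁ l = n ⊗ ∂l and
   l ·₂ n = ∂l ⊗ n for all l in M ⋆ M.  Both sides are linear in l, and by the universal
   property M ⋆ M is generated as a Leibniz algebra by the symbols, so it suffices to
   check these identities on the symbols and to see that they are stable under
   brackets, which is where the crossed-module axioms enter. *)

Section LinearMaps.
Variable K : fieldType.
Implicit Types A B C : lmodType K.

Lemma linmap0 A B (f : A -> B) : linmap f -> f 0 = 0.
Proof.
move=> f_lin; have := f_lin 1 0 0; rewrite !scale1r addr0 => f00.
by apply: (addrI (f 0)); rewrite addr0 -f00.
Qed.

Lemma linmap_comp A B C (f : B -> C) (g : A -> B) :
  linmap f -> linmap g -> linmap (f \o g).
Proof. by move=> f_lin g_lin a x y /=; rewrite g_lin f_lin. Qed.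

Lemma linmap_linear A B (f : {linear A -> B}) : linmap f.
Proof. exact: linearP. Qed.

Lemma bilin_linl A B C (f : A -> B -> C) y : bilin f -> linmap (f^~ y).
Proof. by case=> f_linl _ a x x'; apply: f_linl. Qed.

Lemma bilin_linr A B C (f : A -> B -> C) x : bilin f -> linmap (f x).
Proof. by case=> _ f_linr a y y'; apply: f_linr. Qed.

End LinearMaps.

Section Pullback.
Variables (K : fieldType) (A B : lmodType K) (f : {linear A -> B}).
Hypothesis f_inj : injective f.

Lemma bilin_pullback (X Y : lmodType K) (g : X -> Y -> A) (h : X -> Y -> B) :
  (forall x y, f (g x y) = h x y) -> bilin h -> bilin g.
Proof.
move=> fg [h_linl h_linr]; split=> a x x' y; apply: f_inj.
  by rewrite linearP !fg h_linl.
by rewrite linearP !fg h_linr.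
Qed.

Variables (brA : A -> A -> A) (brB : B -> B -> B).
Hypothesis f_br : forall x y, f (brA x y) = brB (f x) (f y).

Lemma leibniz_pullback : leibniz brB -> leibniz brA.
Proof.
case=> [[br_linl br_linr] br_jacobi]; split; first split.
- by move=> a x x' y; apply: f_inj; rewrite linearP !f_br linearP br_linl.
- by move=> a x y y'; apply: f_inj; rewrite linearP !f_br linearP br_linr.
- by move=> x y z; apply: f_inj; rewrite raddfB /= !f_br br_jacobi.
Qed.

Lemma star_rels_pullback (M : lmodType K) (brM : M -> M -> M) (tA cA : M -> M -> A)
  (tB cB : M -> M -> B) :
  (forall m1 m2, f (tA m1 m2) = tB m1 m2) -> (forall m1 m2, f (cA m1 m2) = cB m1 m2) ->
  star_rels brM brB tB cB -> star_rels brM brA tA cA.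
Proof.
move=> ft fc [r1 [r2 [r3 [r4 [r5 [r6 r7]]]]]].
do 6 (split; first by move=> *; apply: f_inj; rewrite ?raddfB ?raddfN /= !(ft, fc)).
move=> b b' m1 m2 m3 m4 /=; have [e1 e2] := r7 b b' m1 m2 m3 m4.
by split; apply: f_inj; move: e1 e2; case: b; case: b' => /=; rewrite f_br !(ft, fc).
Qed.

End Pullback.

Section StarUniversal.
Variables (K : fieldType) (M P : lmodType K) (brM : M -> M -> M) (brP : P -> P -> P).
Variables (t c : M -> M -> P).
Hypothesis hP : is_star brM brP t c.

Lemma is_star_endo_id (h : P -> P) : leib_hom brP brP h ->
  (forall m1 m2, h (t m1 m2) = t m1 m2) -> (forall m1 m2, h (c m1 m2) = c m1 m2) ->
  forall x, h x = x.
Proof.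
case: hP => [brP_leib [t_bilin [c_bilin [hR univ]]]] h_hom ht hc x.
have [g [_ _ _ g_uniq]] := univ _ _ _ _ brP_leib t_bilin c_bilin hR.
have id_hom : leib_hom brP brP id by split.
by rewrite (g_uniq h) // -(g_uniq id).
Qed.

Section Generated.
Variable S : {pred P}.
Hypothesis S_submod : GRing.submod_closed S.
Hypothesis S_br : forall x y, x \in S -> y \in S -> brP x y \in S.
Hypothesis S_t : forall m1 m2, t m1 m2 \in S.
Hypothesis S_c : forall m1 m2, c m1 m2 \in S.

HB.instance Definition _ := GRing.isSubmodClosed.Build K P S (GRing.submod_closed_semi S_submod).
Inductive sub_carrier := SubCarrier x & x \in S.
Definition sub_val u := let: SubCarrier x _ := u in x.
HB.instance Definition _ := [isSub for sub_val].
HB.instance Definition _ := [Choice of sub_carrier by <:].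
HB.instance Definition _ := [SubChoice_isSubLmodule of sub_carrier by <:].

Let sub_br (u v : sub_carrier) : sub_carrier := SubCarrier (S_br (valP u) (valP v)).
Let sub_t m1 m2 : sub_carrier := SubCarrier (S_t m1 m2).
Let sub_c m1 m2 : sub_carrier := SubCarrier (S_c m1 m2).

(* The universal property applied to S yields a section of the inclusion of S,
   which by uniqueness is onto. *)
Lemma is_star_submod_full x : x \in S.
Proof.
have [brP_leib [t_bilin [c_bilin [hR univ]]]] := hP.
have sub_leib : leibniz sub_br.
  exact: (@leibniz_pullback _ _ _ val val_inj sub_br brP (fun _ _ => erefl)).
have sub_t_bilin : bilin sub_t.
  exact: (@bilin_pullback _ _ _ val val_inj _ _ sub_t t (fun _ _ => erefl)).
have sub_c_bilin : bilin sub_c.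
  exact: (@bilin_pullback _ _ _ val val_inj _ _ sub_c c (fun _ _ => erefl)).
have sub_rels : star_rels brM sub_br sub_t sub_c.
  exact: (@star_rels_pullback _ _ _ val val_inj sub_br brP (fun _ _ => erefl)
            _ _ sub_t sub_c t c (fun _ _ => erefl) (fun _ _ => erefl)).
have [h [[h_lin h_br] ht hc _]] := univ _ _ _ _ sub_leib sub_t_bilin sub_c_bilin sub_rels.
have val_h_hom : leib_hom brP brP (val \o h).
  split; first exact: linmap_comp (linmap_linear _) h_lin.
  by move=> y z /=; rewrite h_br.
have val_hK y : val (h y) = y.
  by apply: (is_star_endo_id val_h_hom) => m1 m2 /=; rewrite ?ht ?hc.
by rewrite -[x]val_hK; apply: valP.
Qed.

End Generated.

Lemma is_star_ind (Q : P -> Prop) :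
  Q 0 -> (forall (a : K) x y, Q x -> Q y -> Q (a *: x + y)) ->
  (forall x y, Q x -> Q y -> Q (brP x y)) ->
  (forall m1 m2, Q (t m1 m2)) -> (forall m1 m2, Q (c m1 m2)) -> forall x, Q x.
Proof.
move=> Q0 Q_lin Q_br Q_t Q_c x.
pose S : {pred P} := fun y => `[< Q y >].
suff: x \in S by move/asboolP.
apply: (@is_star_submod_full S) => [|y z /asboolP Qy /asboolP Qz|m1 m2|m1 m2].
- split; first exact/asboolP.
  by move=> a y z /asboolP Qy /asboolP Qz; apply/asboolP; apply: Q_lin.
- by apply/asboolP; apply: Q_br.
- exact/asboolP.
- exact/asboolP.
Qed.

Lemma is_star_ind_eq (I : Type) (Q : lmodType K) (f g : I -> P -> Q) :
  (forall i, linmap (f i)) -> (forall i, linmap (g i)) ->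
  (forall x y, (forall i, f i x = g i x) -> (forall i, f i y = g i y) ->
     forall i, f i (brP x y) = g i (brP x y)) ->
  (forall i m1 m2, f i (t m1 m2) = g i (t m1 m2)) ->
  (forall i m1 m2, f i (c m1 m2) = g i (c m1 m2)) ->
  forall i x, f i x = g i x.
Proof.
move=> f_lin g_lin fg_br fg_t fg_c i x; move: x i.
apply: is_star_ind => [i|a x y fg_x fg_y i|x y|m1 m2 i|m1 m2 i] //.
- by rewrite (linmap0 (f_lin i)) (linmap0 (g_lin i)).
- by rewrite f_lin g_lin fg_x fg_y.
- exact: fg_br.
Qed.

End StarUniversal.

Section StarRelations.
Variables (K : fieldType) (M P : lmodType K) (brM : M -> M -> M) (brP : P -> P -> P).
Variables (t c : M -> M -> P).
Hypothesis hR : star_rels brM brP t c.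

Lemma star_tc_brl m1 m2 m3 : t (brM m1 m2) m3 = c (brM m1 m2) m3.
Proof.
have [r1 [_ [r3 [_ [r5 _]]]]] := hR.
have := r3 m1 m3 m2; rewrite r5 opprK r1 => /eqP.
by rewrite addrC -subr_eq => /eqP/addrI/oppr_inj.
Qed.

Lemma star_tc_brr m1 m2 m3 : t m1 (brM m2 m3) = c m1 (brM m2 m3).
Proof. by have [r1 [r2 _]] := hR; rewrite r1 r2 !star_tc_brl. Qed.

Lemma star_t_brl m1 m2 m3 : t (brM m1 m2) m3 = t (brM m1 m3) m2 + t m1 (brM m2 m3).
Proof. by have [_ [_ [r3 [_ [r5 _]]]]] := hR; rewrite r3 -star_tc_brl r5 opprK. Qed.

End StarRelations.

Section StarCrossedModule.
Variables (K : fieldType) (M P : lmodType K) (brM : M -> M -> M) (brP : P -> P -> P).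
Variables (t c : M -> M -> P) (act1 : M -> P -> P) (act2 : P -> M -> P) (del : P -> M).
Hypothesis hP : is_star brM brP t c.
Hypothesis hXM : crossed_module brP brM act1 act2 del.
Hypothesis h1t : forall m m1 m2, act1 m (t m1 m2) = t (brM m m1) m2 - c (brM m m2) m1.
Hypothesis h1c : forall m m1 m2, act1 m (c m1 m2) = c (brM m m1) m2 - t (brM m m2) m1.
Hypothesis h2t : forall m m1 m2, act2 (t m1 m2) m = t (brM m1 m) m2 + t m1 (brM m2 m).
Hypothesis h2c : forall m m1 m2, act2 (c m1 m2) m = c (brM m1 m) m2 + c m1 (brM m2 m).
Hypothesis hdt : forall m1 m2, del (t m1 m2) = brM m1 m2.
Hypothesis hdc : forall m1 m2, del (c m1 m2) = brM m1 m2.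

Let hR : star_rels brM brP t c. Proof. by case: hP => [_ [_ [_ []]]]. Qed.
Let t_bilin : bilin t. Proof. by case: hP => [_ []]. Qed.
Let c_bilin : bilin c. Proof. by case: hP => [_ [_ []]]. Qed.
Let del_lin : linmap del. Proof. by case: hXM => [_ [_ [_ [[]]]]]. Qed.
Let del_br x y : del (brP x y) = brM (del x) (del y).
Proof. by case: hXM => [_ [_ [_ [[_ ->]]]]]. Qed.
Let del_act1 n l : del (act1 n l) = brM n (del l).
Proof. by case: hXM => [_ [_ [_ [_ [->]]]]]. Qed.
Let del_act2 l n : del (act2 l n) = brM (del l) n.
Proof. by case: hXM => [_ [_ [_ [_ [_ [->]]]]]]. Qed.
Let act1_del l l' : act1 (del l) l' = brP l l'.
Proof. by case: hXM => [_ [_ [_ [_ [_ [_ [->]]]]]]]. Qed.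
Let act2_del l l' : act2 l (del l') = brP l l'.
Proof. by case: hXM => [_ [_ [_ [_ [_ [_ [_ ->]]]]]]]. Qed.
Let act1_lin n : linmap (act1 n).
Proof. by case: hXM => [_ [_ [[act1_bilin _] _]]]; apply: bilin_linr. Qed.
Let act2_lin n : linmap (act2^~ n).
Proof. by case: hXM => [_ [_ [[_ [act2_bilin _]] _]]]; apply: bilin_linl. Qed.
Let act1_br n l l' : act1 n (brP l l') = brP (act1 n l) l' - brP (act1 n l') l.
Proof. by case: hXM => [_ [_ [[_ [_ [_ [_ [_ [_ [_ ->]]]]]]] _]]]. Qed.
Let act2_br l l' n : act2 (brP l l') n = brP l (act2 l' n) + brP (act2 l n) l'.
Proof.
case: hXM => [_ [_ [[_ [_ [_ [_ [_ [br_act2 _]]]]]] _]]].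
by rewrite br_act2 subrK.
Qed.

Lemma tc_del_l l n : t (del l) n = c (del l) n.
Proof.
move: n l; apply: (is_star_ind_eq hP) => [n|n|x y _ _ n|n m1 m2|n m1 m2].
- exact: linmap_comp (bilin_linl _ t_bilin) del_lin.
- exact: linmap_comp (bilin_linl _ c_bilin) del_lin.
- by rewrite del_br (star_tc_brl hR).
- by rewrite hdt (star_tc_brl hR).
- by rewrite hdc (star_tc_brl hR).
Qed.

Lemma tc_del_r n l : t n (del l) = c n (del l).
Proof.
move: n l; apply: (is_star_ind_eq hP) => [n|n|x y _ _ n|n m1 m2|n m1 m2].
- exact: linmap_comp (bilin_linr _ t_bilin) del_lin.
- exact: linmap_comp (bilin_linr _ c_bilin) del_lin.
- by rewrite del_br (star_tc_brr hR).
- by rewrite hdt (star_tc_brr hR).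
- by rewrite hdc (star_tc_brr hR).
Qed.

Lemma act1_t_del n l : act1 n l = t n (del l).
Proof.
have [r1 _] := hR.
move: n l; apply: (is_star_ind_eq hP) => [n|n|x y IHx IHy n|n m1 m2|n m1 m2].
- exact: act1_lin.
- exact: linmap_comp (bilin_linr _ t_bilin) del_lin.
- by rewrite del_br act1_br -!act1_del !del_act1 IHx IHy r1.
- by rewrite h1t hdt -(star_tc_brl hR) r1.
- by rewrite h1c hdc -(star_tc_brl hR) r1.
Qed.

Lemma act2_t_del l n : act2 l n = t (del l) n.
Proof.
move: n l; apply: (is_star_ind_eq hP) => [n|n|x y IHx IHy n|n m1 m2|n m1 m2].
- exact: act2_lin.
- exact: linmap_comp (bilin_linl _ t_bilin) del_lin.
- rewrite del_br act2_br IHy -act2_del hdt IHx -act1_del del_act2 act1_t_del.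
  by rewrite [RHS](star_t_brl hR) addrC.
- by rewrite h2t hdt [RHS](star_t_brl hR).
- by rewrite h2c hdc -(star_tc_brl hR) -(star_tc_brr hR) [RHS](star_t_brl hR).
Qed.

Lemma star_braiding : braiding brP brM act1 act2 del t c.
Proof.
have [r1 [r2 _]] := hR.
split; first exact: t_bilin.
split; first exact: c_bilin.
split; first by move=> n n'; rewrite hdt hdc.
split; first by move=> l l'; rewrite -tc_del_l -act2_t_del act2_del.
split; first by move=> l n; rewrite -tc_del_l act2_t_del.
split; first by move=> n l; rewrite -tc_del_r act1_t_del.
split; first exact: r1.
split; first by move=> n n' n''; rewrite -(star_tc_brr hR) -!(star_tc_brl hR) r1.
split; first by move=> n n' n''; rewrite -(star_tc_brl hR) r1.
exact: r2.
Qed.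

End StarCrossedModule.

Theorem mainTheorem8 (K : fieldType) (hK : (2%:R : K) != 0)
  (M : lmodType K) (brM : M -> M -> M) (hM : leibniz brM)
  (P : lmodType K) (brP : P -> P -> P) (t c : M -> M -> P)
  (hP : is_star brM brP t c)
  (act1 : M -> P -> P) (act2 : P -> M -> P) (del : P -> M)
  (hXM : crossed_module brP brM act1 act2 del)
  (h1t : forall m m1 m2, act1 m (t m1 m2) = t (brM m m1) m2 - c (brM m m2) m1)
  (h1c : forall m m1 m2, act1 m (c m1 m2) = c (brM m m1) m2 - t (brM m m2) m1)
  (h2t : forall m m1 m2, act2 (t m1 m2) m = t (brM m1 m) m2 + t m1 (brM m2 m))
  (h2c : forall m m1 m2, act2 (c m1 m2) m = c (brM m1 m) m2 + c m1 (brM m2 m))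
  (hdt : forall m1 m2, del (t m1 m2) = brM m1 m2)
  (hdc : forall m1 m2, del (c m1 m2) = brM m1 m2) :
  braiding brP brM act1 act2 del t c.
Proof.
exact: star_braiding hP hXM h1t h1c h2t h2c hdt hdc.
Qed.
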